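(* Let $X=(X_k\xrightarrow{v^k}\cdots\xrightarrow{v^1}\langle1\rangle)$ and $Y=(Y_k\xrightarrow{u^k}\cdots\xrightarrow{u^1}\langle1\rangle)$ be $k$-stage level trees with crossings and let $\sigma=(\sigma_i\colon X_i\to Y_i)_{i}$ be an unordered isomorphism from $X$ to $Y$. Then the family $\overline{\sigma}$ (the same bijections $\sigma_i$, regarded as maps $\overline{X}_i\to\overline{Y}_i$) is an isomorphism of $k$-stage level trees $\overline{X}\to\overline{Y}$, i.e. every $\sigma_i\colon\overline{X}_i\to\overline{Y}_i$ is order preserving, if and only if each $\sigma_i$ is order preserving on the fibres of $v^i$, i.e. for all $a,b\in X_i$ with $v^i(a)=v^i(b)$ and $a<b$ in $X_i$ we have $\sigma_i(a)<\sigma_i(b)$ in $Y_i$.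
   Context: Write $\langle\ell\rangle=\{1<\dots<\ell\}$. A $k$-stage level tree with crossings is a diagram $X_k\xrightarrow{v^k}\cdots\xrightarrow{v^2}X_1\xrightarrow{v^1}\langle1\rangle$ of finite totally ordered sets and arbitrary (not necessarily order preserving) functions; it is a $k$-stage level tree if all maps are order preserving. An unordered isomorphism $X\to Y$ of $k$-stage level trees (with crossings) is a family of bijections $\sigma_i\colon X_i\to Y_i$ of underlying sets commuting with the structure maps ($u^i\sigma_i=\sigma_{i-1}v^i$, $\sigma_0=\mathrm{id}$); an isomorphism of $k$-stage level trees is an unordered isomorphism whose components are order preserving. For a $k$-stage level tree with crossings $X$, $\overline{X}$ is the diagram with the same underlying sets and maps and new orders defined inductively: $\overline{X}_1=X_1$, and $\overline{X}_{i+1}$ carries the unique total order making $v^{i+1}\times\mathrm{id}\colon\overline{X}_{i+1}\to\overline{X}_i\times X_{i+1}$ order preserving, where $\overline{X}_i\times X_{i+1}$ has the lexicographic order ($(a,b)\le(a',b')$ iff $a<a'$, or $a=a'$ and $b\le b'$). Then $\overline{X}$ is a $k$-stage level tree. *)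

From mathcomp Require Import all_boot.
Unset Printing Implicit Defensive.

(* A k-stage level tree with crossings is encoded by sizes n : nat -> nat
   (level i is the totally ordered set 'I_(n i) with its standard order,
   level 0 being <1>, i.e. n 0 = 1) and maps
   v i : 'I_(n i.+1) -> 'I_(n i)  (this is v^{i+1} of the paper).
   Only levels 0..k are relevant. *)

Fixpoint barlt (n : nat -> nat) (v : forall i, 'I_(n i.+1) -> 'I_(n i))
  (i : nat) : rel 'I_(n i) :=
  match i return rel 'I_(n i) with
  | 0 => fun a b => (a < b)%N
  | j.+1 => fun a b =>
      @barlt n v j (v j a) (v j b) || ((v j a == v j b) && (a < b)%N)
  end.
Arguments barlt {n} v i.

From mathcomp Require Import all_boot.

(* Since sigma commutes with the structure maps it sends fibres
   to fibres, so by induction on the level sigma preserves the barred orders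
   exactly when it preserves the order inside every fibre; level 0 is a
   singleton and carries no strict comparisons. *)

Section BarOrder.

Variables (n : nat -> nat) (v : forall i, 'I_(n i.+1) -> 'I_(n i)).

Lemma barltxx i (a : 'I_(n i)) : barlt v i a a = false.
Proof. by elim: i a => [|i IH] a /=; rewrite ?IH ?eqxx ltnn. Qed.

Lemma barlt0F (n0 : n 0 = 1) (a b : 'I_(n 0)) : barlt v 0 a b = false.
Proof.
rewrite /=; have := ltn_ord b.
by move: (nat_of_ord a) (nat_of_ord b); rewrite n0 => ? m /ltnSE; rewrite leqn0 => /eqP ->.
Qed.

Lemma barltS_fibre i (a b : 'I_(n i.+1)) :
  v i a = v i b -> barlt v i.+1 a b = (a < b).
Proof. by move=> /= ->; rewrite barltxx eqxx. Qed.

End BarOrder.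

Section BarMorphism.

Variables (k : nat) (nX nY : nat -> nat).
Variables (v : forall i, 'I_(nX i.+1) -> 'I_(nX i))
          (u : forall i, 'I_(nY i.+1) -> 'I_(nY i)).
Variable sigma : forall i, 'I_(nX i) -> 'I_(nY i).
Hypothesis sigma_comm : forall i, i < k -> forall a : 'I_(nX i.+1),
  u i (sigma i.+1 a) = sigma i (v i a).

Lemma barlt_mono_fibre_mono :
  (forall i, i <= k -> forall a b, barlt v i a b -> barlt u i (sigma i a) (sigma i b)) ->
  forall i, i < k -> forall a b : 'I_(nX i.+1),
    v i a = v i b -> a < b -> sigma i.+1 a < sigma i.+1 b.
Proof.
move=> mono i ltik a b eab ltab.
have := mono i.+1 ltik a b.
by rewrite !barltS_fibre ?sigma_comm ?eab //; apply.
Qed.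

Lemma fibre_mono_barlt_mono (n0 : nX 0 = 1) :
  (forall i, i < k -> forall a b : 'I_(nX i.+1),
     v i a = v i b -> a < b -> sigma i.+1 a < sigma i.+1 b) ->
  forall i, i <= k -> forall a b, barlt v i a b -> barlt u i (sigma i a) (sigma i b).
Proof.
move=> mono; elim=> [|i IH] leik a b; first by rewrite barlt0F.
rewrite /= !sigma_comm //.
case/orP=> [ltv | /andP[/eqP eab ltab]]; first by rewrite IH ?(ltnW leik).
by rewrite eab eqxx mono ?orbT.
Qed.

End BarMorphism.

Theorem mainTheorem4 (k : nat)
  (nX nY : nat -> nat) (hX0 : nX 0 = 1) (hY0 : nY 0 = 1)
  (v : forall i, 'I_(nX i.+1) -> 'I_(nX i))
  (u : forall i, 'I_(nY i.+1) -> 'I_(nY i))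
  (sigma : forall i, 'I_(nX i) -> 'I_(nY i))
  (sigma_bij : forall i, i <= k -> bijective (sigma i))
  (sigma_comm : forall i, i < k -> forall a : 'I_(nX i.+1),
      u i (sigma i.+1 a) = sigma i (v i a)) :
  (forall i, i <= k -> forall a b : 'I_(nX i),
      barlt v i a b -> barlt u i (sigma i a) (sigma i b))
  <->
  (forall i, i < k -> forall a b : 'I_(nX i.+1),
      v i a = v i b -> a < b -> sigma i.+1 a < sigma i.+1 b).
Proof.
split; [exact: barlt_mono_fibre_mono | exact: fibre_mono_barlt_mono].
Qed.
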